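(* Let $\mathcal{A}$ be a separating union-closed family with base set $[n]$ and height $h=4$, and let $\mathcal{B}=\{B_1,B_2,B_3\}$ be a choice of $\mathcal{B}(\mathcal{A})$ with $|\mathcal{B}|=3$. Suppose $|B|=n-1$, where $B=b(\mathcal{A}_{<n/2})$, and let $A \in \mathcal{A}_{<n/2} \setminus \mathcal{B}$. Then either $A = \bigcup_{i=1}^3 \mathrm{irr}_{\mathcal{B}}(B_i)$, or $A$ satisfies exactly one of the following three conditions: (i) $A \cap \mathrm{irr}_{\mathcal{B}}(B_1) = \emptyset$ and $(B_2 \cup B_3) \setminus (B_2 \cap B_3) \subseteq A$; (ii) $A \cap \mathrm{irr}_{\mathcal{B}}(B_2) = \emptyset$ and $(B_1 \cup B_3) \setminus (B_1 \cap B_3) \subseteq A$; (iii) $A \cap \mathrm{irr}_{\mathcal{B}}(B_3) = \emptyset$ and $(B_1 \cup B_2) \setminus (B_1 \cap B_2) \subseteq A$.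
   Context: A family of sets $\mathcal{A}$ is union-closed if it is a finite family of distinct finite sets with at least one nonempty member set, and $X,Y\in\mathcal{A}$ implies $X\cup Y\in\mathcal{A}$ (the empty set may be a member). For a family $\mathcal{F}$, $b(\mathcal{F})=\bigcup_{F\in\mathcal{F}}F$; the base set $b(\mathcal{A})$ is denoted $[n]=\{1,\dots,n\}$. $\mathcal{A}$ is separating if for any two distinct $x,y\in[n]$ there is $A\in\mathcal{A}$ containing exactly one of $x,y$. A chain in $\mathcal{A}$ is a subfamily any two distinct members of which are comparable under proper inclusion; the height $h$ of $\mathcal{A}$ is the maximum size of a chain in $\mathcal{A}$. For real $x\ge 0$, $\mathcal{A}_{<x}=\{A\in\mathcal{A} : |A|<x\}$. For $\mathcal{S}\subseteq\mathcal{A}$ and $S\in\mathcal{S}$, $\mathrm{irr}_{\mathcal{S}}(S)=\{s\in S : s\notin b(\mathcal{S}\setminus\{S\})\}$, and $\mathcal{S}$ is irredundant if $\mathrm{irr}_{\mathcal{S}}(S)\neq\emptyset$ for every $S\in\mathcal{S}$. With $B=b(\mathcal{A}_{<n/2})$, $\mathcal{B}(\mathcal{A})$ denotes any irredundant subfamily of $\mathcal{A}_{<n/2}$ of minimum size such that $b(\mathcal{B}(\mathcal{A}))=B$. *)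

From mathcomp Require Import all_boot.
Set Implicit Arguments. Unset Strict Implicit. Unset Printing Implicit Defensive.

(* Ground set [n] = {1,...,n} is represented by 'I_n = {0,...,n-1}. *)
Section Fam.
Variable n : nat.
Notation fam := {set {set 'I_n}}.

Definition bU (F : fam) : {set 'I_n} := \bigcup_(X in F) X.

Definition union_closed (F : fam) : Prop :=
  (exists2 X, X \in F & X != set0) /\
  (forall X Y, X \in F -> Y \in F -> X :|: Y \in F).

Definition has_base_set_n (F : fam) : Prop := bU F = [set: 'I_n].

Definition separating (F : fam) : Prop :=
  forall x y : 'I_n, x != y -> exists2 X, X \in F & (x \in X) != (y \in X).

Definition is_chain (C : fam) : bool :=
  [forall X in C, forall Y in C, (X != Y) ==> ((X \proper Y) || (Y \proper X))].

Definition height (F : fam) : nat := \max_(C in powerset F | is_chain C) #|C|.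

Definition fam_lt_half (F : fam) : fam := [set X in F | 2 * #|X| < n].

Definition irr (S : fam) (X : {set 'I_n}) : {set 'I_n} :=
  [set s in X | s \notin bU (S :\ X)].

Definition irredundant (S : fam) : Prop := forall X, X \in S -> irr S X != set0.

Definition is_B_choice (F Bf : fam) : Prop :=
  [/\ Bf \subset fam_lt_half F, irredundant Bf, bU Bf = bU (fam_lt_half F) &
      forall S : fam, S \subset fam_lt_half F -> irredundant S ->
        bU S = bU (fam_lt_half F) -> #|Bf| <= #|S| ].
End Fam.

From mathcomp Require Import all_boot zify.
Set Implicit Arguments. Unset Strict Implicit. Unset Printing Implicit Defensive.

(** Union-closedness and the base set put [[n]] in [F], and [U := B1 :|: B2 :|: B3]
    is a member of size [n - 1], so height 4 forbids any chain [X1 ⊊ X2 ⊊ X3 ⊊ U]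
    in [F].  Every [Bi] has a private point, hence [Bi ⊊ Bi ∪ Bj ⊊ U].  If
    [A ∪ Bi ∪ Bj ≠ U] for some pair, then comparing [Bi], [A ∪ Bi], [Bi ∪ Bj] and
    [A ∪ Bi ∪ Bj] with such chains forces [A ⊆ Bi ∪ Bj] and [Bi Δ Bj ⊆ A]: this is
    the condition of the third index, and the private points of [Bi] and [Bj] lie
    in [A], ruling out the other two.  Otherwise [A] contains every private part,
    and since all the sets have fewer than [n/2] points while [U] has [n - 1],
    double counting the points of [U] leaves no room for anything else in [A]. *)

Definition exactly_one3 (b1 b2 b3 : bool) :=
  [|| [&& b1, ~~ b2 & ~~ b3], [&& ~~ b1, b2 & ~~ b3] | [&& ~~ b1, ~~ b2 & b3]].

Section ThreeSets.
Variable T : finType.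
Implicit Types X Y Z A : {set T}.

Lemma card_set3 (a b c : T) : #|[set a; b; c]| = 3 -> [/\ a != b, a != c & b != c].
Proof.
have -> : [set a; b; c] = [set x in [:: a; b; c]] by apply/setP => x; rewrite !inE orbA.
rewrite cardsE => /card_uniqP /= /[!inE] /and3P [/norP [ab ac] bc _].
by rewrite ab ac bc.
Qed.

(* Condition (i) of the theorem for [X = B1]: [X :\: (Y :|: Z)] is [irr] of [X]
   in [[set X; Y; Z]]. *)
Definition misses_covers A X Y Z :=
  (A :&: (X :\: (Y :|: Z)) == set0) && ((Y :|: Z) :\: (Y :&: Z) \subset A).

Lemma misses_coversC A X Y Z : misses_covers A X Y Z = misses_covers A X Z Y.
Proof. by rewrite /misses_covers [Y :|: Z]setUC [Y :&: Z]setIC. Qed.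

(* Cyclic in [(X, Y, Z)], so that the three pairs of [B1, B2, B3] are rotations. *)
Lemma misses_covers_of_pair A X Y Z :
  A \subset X :|: Y -> Y \subset A :|: X -> X \subset A :|: Y ->
  ~~ (X \subset Y :|: Z) -> ~~ (Y \subset Z :|: X) ->
  [&& misses_covers A Z X Y, ~~ misses_covers A X Y Z & ~~ misses_covers A Y Z X].
Proof.
move=> AXY YAX XAY /subsetPn [x xX /[!inE] /norP [xY xZ]].
move=> /subsetPn [y yY /[!inE] /norP [yZ yX]].
have xA : x \in A by have /[!inE] := subsetP XAY x xX; rewrite (negbTE xY) orbF.
have yA : y \in A by have /[!inE] := subsetP YAX y yY; rewrite (negbTE yX) orbF.
rewrite /misses_covers !negb_and; apply/and3P; split.
- rewrite setIDA setD_eq0 (subset_trans (subsetIl _ _) AXY) /=.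
  rewrite setDUl !setDIr !setDv set0U setU0 subUset !subDset.
  by rewrite [Y :|: A]setUC [X :|: A]setUC XAY YAX.
- by apply/orP; left; apply/set0Pn; exists x; rewrite !inE xA xX (negbTE xY) (negbTE xZ).
- by apply/orP; left; apply/set0Pn; exists y; rewrite !inE yA yY (negbTE yX) (negbTE yZ).
Qed.

Definition private_union X Y Z :=
  X :\: (Y :|: Z) :|: Y :\: (X :|: Z) :|: Z :\: (X :|: Y).

Lemma private_union_sub A X Y Z :
  X \subset A :|: Y :|: Z -> Y \subset A :|: Z :|: X -> Z \subset A :|: X :|: Y ->
  private_union X Y Z \subset A.
Proof.
move=> /subsetP XA /subsetP YA /subsetP ZA; apply/subsetP => x.
move: (XA x) (YA x) (ZA x); rewrite !inE.
by case: (x \in A); case: (x \in X); case: (x \in Y); case: (x \in Z).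
Qed.

Lemma card_private_union X Y Z :
  2 * #|X :|: Y :|: Z| <= #|X| + #|Y| + #|Z| + #|private_union X Y Z|.
Proof.
rewrite -!sum1_card !(big_mkcond (fun x => x \in _)) big_distrr -!big_split /=.
apply: leq_sum => x _; rewrite !inE.
by case: (x \in X); case: (x \in Y); case: (x \in Z).
Qed.

Lemma eq_private_union (m : nat) A X Y Z :
  2 * #|X| < m -> 2 * #|Y| < m -> 2 * #|Z| < m -> 2 * #|A| < m ->
  m <= #|X :|: Y :|: Z|.+1 -> private_union X Y Z \subset A ->
  A = private_union X Y Z.
Proof.
move=> ltX ltY ltZ ltA leU sPA; apply/eqP; rewrite eq_sym eqEproper sPA /=.
apply/negP => /proper_card ltPA.
have := card_private_union X Y Z; lia.
Qed.
End ThreeSets.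

Section Families.
Variables (n : nat) (F : {set {set 'I_n}}).

Lemma bU_set3 (a b c : {set 'I_n}) : bU [set a; b; c] = a :|: b :|: c.
Proof. by rewrite /bU !bigcup_setU !big_set1. Qed.

Lemma irr_set3 (a b c : {set 'I_n}) : a != b -> a != c -> b != c ->
  [/\ irr [set a; b; c] a = a :\: (b :|: c), irr [set a; b; c] b = b :\: (a :|: c)
    & irr [set a; b; c] c = c :\: (a :|: b)].
Proof.
have irr_head x y z : x != y -> x != z -> irr [set x; y; z] x = x :\: (y :|: z).
  move=> xy xz; rewrite /irr; have -> : [set x; y; z] :\ x = [set y; z].
    apply/setP => w; rewrite !inE.
    by case: (eqVneq w x) => [->|] /=; rewrite ?(negbTE xy) ?(negbTE xz).
  by apply/setP => w; rewrite /bU bigcup_setU !big_set1 !inE andbC.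
move=> ab ac bc; split; first exact: irr_head.
- by rewrite (setUC [set a]) irr_head // eq_sym.
- by rewrite setUC setUA irr_head // eq_sym.
Qed.

Lemma irredundant_set3 (a b c : {set 'I_n}) : a != b -> a != c -> b != c ->
  irredundant [set a; b; c] ->
  [/\ ~~ (a \subset b :|: c), ~~ (b \subset c :|: a) & ~~ (c \subset a :|: b)].
Proof.
move=> ab ac bc abc_irr; have [irr_a irr_b irr_c] := irr_set3 ab ac bc.
rewrite -!setD_eq0 -irr_a -irr_c [c :|: a]setUC -irr_b.
by rewrite !abc_irr // !inE eqxx ?orbT.
Qed.

Lemma bU_in_union_closed : union_closed F -> bU F \in F.
Proof.
case=> [[X0 X0F X0_neq0] UC].
have /orP [/eqP bU0|//] : (bU F == set0) || (bU F \in F).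
  apply: (big_ind (fun X => (X == set0) || (X \in F))) => [|X Y|X ->]; rewrite ?eqxx ?orbT //.
  move=> /orP[/eqP->|XF] /orP[/eqP->|YF]; rewrite ?set0U ?setU0 ?eqxx //.
  - by rewrite YF orbT.
  - by rewrite XF orbT.
  - by rewrite UC ?orbT.
have : X0 \subset bU F := bigcup_sup X0 X0F.
by rewrite bU0 subset0 (negbTE X0_neq0).
Qed.

Lemma mem_fam_lt_half X :
  X \in fam_lt_half F -> [/\ X \in F, 2 * #|X| < n & X \subset bU (fam_lt_half F)].
Proof.
by move=> X_half; rewrite [X \subset _]bigcup_sup //; move: X_half; rewrite inE => /andP [].
Qed.

Let proper_set_trans : transitive (fun X Y : {set 'I_n} => X \proper Y).
Proof. by move=> Y X Z; apply: proper_trans. Qed.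

Lemma is_chain_sorted (s : seq {set 'I_n}) :
  sorted (fun X Y : {set 'I_n} => X \proper Y) s -> is_chain [set:: s].
Proof.
rewrite (sorted_pairwise proper_set_trans) => /(pairwiseP set0) s_rel.
apply/forall_inP => _ /[!inE] /(nthP set0) [i ri <-].
apply/forall_inP => _ /[!inE] /(nthP set0) [j rj <-].
apply/implyP => neq_ij; have [lt_ij|lt_ji|eq_ij] := ltngtP i j.
- by rewrite [_ \proper _]s_rel.
- by rewrite [_ \proper _ in X in _ || X]s_rel ?orbT.
- by rewrite eq_ij eqxx in neq_ij.
Qed.

Lemma size_le_height (s : seq {set 'I_n}) : {subset s <= F} ->
  sorted (fun X Y : {set 'I_n} => X \proper Y) s -> size s <= height F.
Proof.
move=> sF s_sorted.
have /card_uniqP <- :=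
  sorted_uniq proper_set_trans (fun X => negbTE (proper_irrefl X)) s_sorted.
rewrite -cardsE; apply: (@leq_bigmax_cond _ _ _ [set:: s]).
by rewrite is_chain_sorted // andbT inE; apply/subsetP => X /[!inE]; apply: sF.
Qed.

Variable U : {set 'I_n}.
Hypotheses (F_height : height F <= 4) (UC : {in F &, forall X Y, X :|: Y \in F}).
Hypotheses (setT_F : [set: 'I_n] \in F) (UF : U \in F) (U_proper : U \proper [set: 'I_n]).

Lemma chain3_reaches_top X1 X2 X3 : X1 \in F -> X2 \in F -> X3 \in F ->
  X1 \proper X2 -> X2 \proper X3 -> X3 \subset U -> U \subset X3.
Proof.
move=> X1F X2F X3F lt12 lt23 le3U; apply: contraT => U_notin_X3.
have lt3U : X3 \proper U by rewrite properE le3U.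
have : 5 <= height F.
  apply: (@size_le_height [:: X1; X2; X3; U; [set: 'I_n]]).
    by apply/allP; rewrite /= X1F X2F X3F UF setT_F.
  by rewrite /= lt12 lt23 lt3U U_proper.
by rewrite leqNgt ltnS F_height.
Qed.

Section UncoveredPair.
Variables X Y A : {set 'I_n}.
Hypotheses (XF : X \in F) (YF : Y \in F) (AF : A \in F).
Hypotheses (XU : X \subset U) (YU : Y \subset U) (AU : A \subset U).
Hypotheses (Y_notin_X : ~~ (Y \subset X)) (U_uncovered : ~~ (U \subset A :|: X :|: Y)).

Let X_proper_XY : X \proper X :|: Y.
Proof. by rewrite properE subsetUl subUset subxx. Qed.

Let AXY_sub_U : A :|: X :|: Y \subset U.
Proof. by rewrite !subUset AU XU YU. Qed.

Lemma uncovered_sub_pair : A \subset X :|: Y.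
Proof.
move: U_uncovered; apply: contraR => A_notin_XY.
apply: (chain3_reaches_top XF (UC XF YF) (UC (UC AF XF) YF) X_proper_XY) => //.
by rewrite properE -setUA subsetUr subUset subxx andbT.
Qed.

Lemma uncovered_not_sub : A != X -> ~~ (A \subset X).
Proof.
move=> AX; move: U_uncovered; apply: contra => A_sub_X.
apply: subset_trans (chain3_reaches_top AF XF (UC XF YF) _ X_proper_XY _) _.
- by rewrite properEneq AX.
- by rewrite subUset XU YU.
- by rewrite -setUA subsetUr.
Qed.

Lemma uncovered_sub_setU : A != X -> Y \subset A :|: X.
Proof.
move=> /uncovered_not_sub A_notin_X; move: U_uncovered; apply: contraR => Y_notin_AX.
apply: (chain3_reaches_top XF (UC AF XF) (UC (UC AF XF) YF)) => //.
- by rewrite properE subsetUr subUset subxx andbT.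
- by rewrite properE subsetUl subUset subxx.
Qed.
End UncoveredPair.

Lemma misses_covers_uncovered X Y Z A :
  X \in F -> Y \in F -> A \in F -> X \subset U -> Y \subset U -> A \subset U ->
  A != X -> A != Y -> ~~ (X \subset Y :|: Z) -> ~~ (Y \subset Z :|: X) ->
  ~~ (U \subset A :|: X :|: Y) ->
  [&& misses_covers A Z X Y, ~~ misses_covers A X Y Z & ~~ misses_covers A Y Z X].
Proof.
move=> XF YF AF XU YU AU AX AY X_private Y_private U_uncovered.
have Y_notin_X : ~~ (Y \subset X) by apply: contra Y_private => YX; rewrite subsetU ?YX ?orbT.
have X_notin_Y : ~~ (X \subset Y) by apply: contra X_private => XY; rewrite subsetU ?XY.
have U_uncovered' : ~~ (U \subset A :|: Y :|: X) by rewrite setUAC.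
apply: misses_covers_of_pair => //.
- exact: uncovered_sub_pair U_uncovered.
- exact: uncovered_sub_setU U_uncovered AX.
- exact: uncovered_sub_setU U_uncovered' AY.
Qed.

Section Trichotomy.
Variables B1 B2 B3 A : {set 'I_n}.
Hypotheses (B1F : B1 \in F) (B2F : B2 \in F) (B3F : B3 \in F) (AF : A \in F).
Hypotheses (B1U : B1 \subset U) (B2U : B2 \subset U) (B3U : B3 \subset U) (AU : A \subset U).
Hypotheses (B1_private : ~~ (B1 \subset B2 :|: B3)) (B2_private : ~~ (B2 \subset B3 :|: B1)).
Hypotheses (B3_private : ~~ (B3 \subset B1 :|: B2)).
Hypotheses (AB1 : A != B1) (AB2 : A != B2) (AB3 : A != B3).

Lemma misses_covers_trichotomy :
  ~~ [&& U \subset A :|: B1 :|: B2, U \subset A :|: B2 :|: B3 & U \subset A :|: B3 :|: B1] ->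
  exactly_one3 (misses_covers A B1 B2 B3) (misses_covers A B2 B3 B1)
    (misses_covers A B3 B1 B2).
Proof.
move=> /[!negb_and] /or3P [unc12|unc23|unc31].
- by have /and3P [-> /negbTE-> /negbTE->] :=
    misses_covers_uncovered B1F B2F AF B1U B2U AU AB1 AB2 B1_private B2_private unc12.
- by have /and3P [-> /negbTE-> /negbTE->] :=
    misses_covers_uncovered B2F B3F AF B2U B3U AU AB2 AB3 B2_private B3_private unc23.
- by have /and3P [-> /negbTE-> /negbTE->] :=
    misses_covers_uncovered B3F B1F AF B3U B1U AU AB3 AB1 B3_private B1_private unc31.
Qed.

Lemma private_union_or_exactly_one :
  2 * #|B1| < n -> 2 * #|B2| < n -> 2 * #|B3| < n -> 2 * #|A| < n ->
  n <= #|B1 :|: B2 :|: B3|.+1 ->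
  A = private_union B1 B2 B3 \/
  exactly_one3 (misses_covers A B1 B2 B3) (misses_covers A B2 B3 B1)
    (misses_covers A B3 B1 B2).
Proof.
move=> B1_small B2_small B3_small A_small n_le_U.
have [/and3P [cov12 cov23 cov31]|uncovered] :=
  boolP [&& U \subset A :|: B1 :|: B2, U \subset A :|: B2 :|: B3 & U \subset A :|: B3 :|: B1].
  left; apply: eq_private_union B1_small B2_small B3_small A_small n_le_U _.
  apply: private_union_sub.
  - exact: subset_trans B1U cov23.
  - exact: subset_trans B2U cov31.
  - exact: subset_trans B3U cov12.
by right; apply: misses_covers_trichotomy.
Qed.
End Trichotomy.
End Families.

Theorem propositionI (n : nat) (F : {set {set 'I_n}})
  (B1 B2 B3 A : {set 'I_n}) :
  union_closed F -> has_base_set_n F -> separating F -> height F = 4 ->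
  is_B_choice F [set B1; B2; B3] -> #|[set B1; B2; B3]| = 3 ->
  #|bU (fam_lt_half F)| = n - 1 ->
  A \in fam_lt_half F -> A \notin [set B1; B2; B3] ->
  let Bf := [set B1; B2; B3] in
  let c1 := (A :&: irr Bf B1 == set0) && ((B2 :|: B3) :\: (B2 :&: B3) \subset A) in
  let c2 := (A :&: irr Bf B2 == set0) && ((B1 :|: B3) :\: (B1 :&: B3) \subset A) in
  let c3 := (A :&: irr Bf B3 == set0) && ((B1 :|: B2) :\: (B1 :&: B2) \subset A) in
  A = irr Bf B1 :|: irr Bf B2 :|: irr Bf B3 \/
  [|| [&& c1, ~~ c2 & ~~ c3], [&& ~~ c1, c2 & ~~ c3] | [&& ~~ c1, ~~ c2 & c3]].
Proof.
move=> F_uc F_base _ /eqP; rewrite eqn_leq => /andP [F_height _].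
move=> [Bf_half Bf_irr Bf_bU _] Bf_card U_card A_half A_notin Bf c1 c2 c3.
have [B12 B13 B23] := card_set3 Bf_card.
have [irr1 irr2 irr3] := irr_set3 B12 B13 B23.
have [B1_private B2_private B3_private] := irredundant_set3 B12 B13 B23 Bf_irr.
rewrite /c1 /c2 /c3 irr1 irr2 irr3 -/(private_union B1 B2 B3).
rewrite -/(misses_covers A B1 B2 B3) -/(misses_covers A B3 B1 B2).
rewrite -/(misses_covers A B2 B1 B3) (misses_coversC A B2).
set U := bU (fam_lt_half F).
have U_def : U = B1 :|: B2 :|: B3 by rewrite /U -Bf_bU bU_set3.
have Bf_mem X : X \in Bf -> [/\ X \in F, 2 * #|X| < n & X \subset U].
  by move/(subsetP Bf_half); apply: mem_fam_lt_half.
have [|B1F B1_small B1U] := Bf_mem B1; first by rewrite !inE eqxx.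
have [|B2F B2_small B2U] := Bf_mem B2; first by rewrite !inE eqxx orbT.
have [|B3F B3_small B3U] := Bf_mem B3; first by rewrite !inE eqxx orbT.
have [AF A_small AU] := mem_fam_lt_half A_half.
move: A_notin; rewrite !inE !negb_or => /andP [/andP [AB1 AB2] AB3].
have setT_F : [set: 'I_n] \in F by rewrite -F_base bU_in_union_closed.
have UF : U \in F by rewrite U_def !F_uc.2.
have U_proper : U \proper [set: 'I_n].
  rewrite properEcard subsetT cardsT card_ord U_card ltn_subrL /=.
  exact: leq_ltn_trans (leq0n _) A_small.
apply: (private_union_or_exactly_one F_height F_uc.2 setT_F UF U_proper B1F B2F B3F AF
  B1U B2U B3U AU B1_private B2_private B3_private AB1 AB2 AB3) => //.
by rewrite -U_def U_card subn1 leqSpred.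
Qed.
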